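(* Let $m,n$ be even positive integers and let $\mathcal{X}_0,\mathcal{X}_1\subseteq\{0,1\}^{2mn}$ be as in the context. There exists a real multilinear polynomial $p$ in $2mn$ variables of degree $\min(n/2,m/2)+1$ such that $p(x)\neq 0$ for all $x\in\mathcal{X}_1$ and $p(x)=0$ for all $x\in\mathcal{X}_0$. More precisely, there is such a polynomial of degree $n/2+1$ (with $p>0$ on $\mathcal{X}_1$) and there is such a polynomial of degree $m/2+1$ (with $p=n/2$ on $\mathcal{X}_1$).
   Context: For $z\in\{0,1\}^k$ let $w(z)$ denote its Hamming weight. Let $\mathcal{A}_1=\{0^m y : y\in\{0,1\}^m,\ m/2\le w(y)\le m\}$ and $\mathcal{A}_0=\{y0^m : y\in\{0,1\}^m,\ m/2\le w(y)\le m\}$ (subsets of $\{0,1\}^{2m}$). A string $x\in\{0,1\}^{2mn}$ is viewed as $n$ consecutive blocks of $2m$ bits, each block being $x^{(0,i)}x^{(1,i)}$ with $x^{(0,i)},x^{(1,i)}\in\{0,1\}^m$, $i=1,\dots,n$. Define $\mathcal{X}_1=\mathcal{A}_0\times\cdots\times\mathcal{A}_0$ ($n$ factors) and $\mathcal{X}_0=\bigcup\{\mathcal{A}_{y_1}\times\cdots\times\mathcal{A}_{y_n} : y\in\{0,1\}^n,\ w(y)=n/2\}$. A multilinear polynomial is $p(x)=\sum_{S\subseteq[N]}a_S\prod_{i\in S}x_i$ with real $a_S$; its degree is $\max\{|S|: a_S\neq 0\}$. *)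

From HB Require Import structures.
From mathcomp Require Import all_boot all_order all_algebra.
From mathcomp Require Import Rstruct.
From Stdlib Require Import Rdefinitions.
Set Implicit Arguments. Unset Strict Implicit. Unset Printing Implicit Defensive.
Import Order.TTheory GRing.Theory Num.Theory.
Local Open Scope ring_scope.

(* Real multilinear polynomial in N variables x_0..x_{N-1}: its coefficient
   family (a_S)_{S subset [N]}. *)
Definition mlpoly (N : nat) := {ffun {set 'I_N} -> Rdefinitions.R}.

Definition mleval (N : nat) (p : mlpoly N) (x : 'I_N -> bool) : Rdefinitions.R :=
  \sum_(S : {set 'I_N}) p S * \prod_(i in S) ((x i)%:R : Rdefinitions.R).

Definition mldeg (N : nat) (p : mlpoly N) : nat :=
  (\max_(S : {set 'I_N} | p S != 0%R) #|S|)%nat.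

(* bit number k (0-based) of x, false if out of range *)
Definition bit (N : nat) (x : 'I_N -> bool) (k : nat) : bool :=
  if (insub k : option 'I_N) is Some o then x o else false.

(* Hamming weight of x^{(b,i)} (b = 0 or 1, i 0-based block index):
   bits 2m*i + b*m + j, j < m. *)
Definition halfw (m N : nat) (x : 'I_N -> bool) (i : nat) (b : bool) : nat :=
  (\sum_(j < m) nat_of_bool (bit x (2 * m * i + b * m + j)))%nat.

(* block i of x lies in A_c :  A_1 = 0^m y, A_0 = y 0^m, with m/2 <= w(y) <= m *)
Definition inA (m N : nat) (c : bool) (x : 'I_N -> bool) (i : nat) : bool :=
  [&& halfw m x i (~~ c) == 0%nat, leq (m./2) (halfw m x i c) & leq (halfw m x i c) m].

Definition X1 (m n : nat) (x : 'I_(2 * m * n) -> bool) : Prop :=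
  forall i : 'I_n, inA m false x i.

Definition X0 (m n : nat) (x : 'I_(2 * m * n) -> bool) : Prop :=
  exists y : 'I_n -> bool,
    #|[set i | y i]| = n./2 /\ forall i : 'I_n, inA m (y i) x i.

(* Both polynomials are built from the block weights w(x^(b,i)), each a sum of
   variables.  For degree n/2 + 1 take the product of w(x^(0,i)) over the first
   n/2 + 1 blocks: it is positive on X_1, while on X_0 the n/2 blocks of type
   A_1 cannot all lie outside these n/2 + 1 blocks, and such a block has
   w(x^(0,i)) = 0.  For degree m/2 + 1 compose each w(x^(1,i)) with a univariate
   polynomial h of degree m/2 + 1 with h(0) = 0 and h = 1 on [m/2, m]; then
   n/2 - sum_i h(w(x^(1,i))) equals n/2 on X_1 and n/2 - w(y) = 0 on X_0.
   Finally, adding the monomial of a set containing the variables x_0 and x_m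
   (the first bits of both halves of the first block, never both set on X_0
   or X_1)
   makes the degree exact without changing the values on X_0 and X_1. *)

From HB Require Import structures.
From mathcomp Require Import all_boot all_order all_algebra.
From mathcomp Require Import Rstruct.
From Stdlib Require Import Rdefinitions.
From mathcomp Require Import zify.
Set Implicit Arguments. Unset Strict Implicit. Unset Printing Implicit Defensive.
Import Order.TTheory GRing.Theory Num.Theory.
Local Open Scope ring_scope.

Local Notation RR := Rdefinitions.R.

Lemma exists_card_between (T : finType) (A B : {set T}) k :
  A \subset B -> (#|A| <= k <= #|B|)%nat ->
  exists S : {set T}, [/\ A \subset S, S \subset B & #|S| = k].
Proof.
move=> sAB /andP[leAk leKB]; have [d] := ubnPeq (k - #|A|)%nat.
elim: d A sAB leAk => [|d IHd] A sAB leAk dE.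
  by exists A; split=> //; apply/eqP; rewrite eqn_leq leAk; lia.
have /properP[_ [x xB xNA]] : A \proper B by rewrite properEcard sAB; lia.
have cardxA : #|x |: A| = #|A|.+1 by rewrite cardsU1 xNA.
have sxAB : x |: A \subset B by rewrite subUset sub1set xB.
have [S [sxAS sSB cS]] := IHd (x |: A) sxAB (ltac:(lia)) (ltac:(lia)).
by exists S; split=> //; apply: subset_trans sxAS; apply: subsetUr.
Qed.

Lemma card_ord_ltn n k : (k <= n)%nat -> #|[set i : 'I_n | (i < k)%nat]| = k.
Proof.
move=> le_kn; have -> : [set i : 'I_n | (i < k)%nat] = widen_ord le_kn @: [set: 'I_k].
  apply/setP => i; rewrite inE; apply/idP/imsetP => [ik|[j _ ->]] /=; last exact: ltn_ord.
  by exists (Ordinal ik); [rewrite inE | apply: val_inj].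
by rewrite card_imset ?cardsT ?card_ord // => a b /(congr1 val) ab; apply: val_inj.
Qed.

Lemma exists_ord_ltn_mem n k (A : {set 'I_n}) :
  (k <= n < #|A| + k)%nat -> exists2 i : 'I_n, (i < k)%nat & i \in A.
Proof.
move=> /andP[le_kn lt_n]; apply/exists_inP; apply: contraLR lt_n.
move=> /exists_inPn noA; rewrite -leqNgt.
have : [set i : 'I_n | (i < k)%nat] \subset ~: A.
  by apply/subsetP => i; rewrite !inE => /noA.
move/subset_leq_card; rewrite card_ord_ltn // => le_kC.
by rewrite -[X in (_ <= X)%nat](card_ord n) -(cardsC A) leq_add2l.
Qed.

Lemma prod_natr_bits N (x : 'I_N -> bool) (S : {set 'I_N}) :
  \prod_(i in S) ((x i)%:R : RR) = (S \subset [set i | x i] : nat)%:R.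
Proof.
have [sSx|] := boolP (S \subset _).
  by rewrite big1 // => i /(subsetP sSx); rewrite inE => ->.
case/subsetPn => i iS; rewrite inE => /negbTE xi.
by rewrite (bigD1 i) //= xi mul0r.
Qed.

Lemma bitE N (x : 'I_N -> bool) (i : 'I_N) : bit x i = x i.
Proof. by rewrite /bit valK. Qed.

Section MultilinearRepresentation.

Variable N : nat.
Implicit Types (g h : ('I_N -> bool) -> RR) (D : nat).

Definition mlrep D g :=
  exists p : mlpoly N,
    (forall S, p S != 0 -> (#|S| <= D)%nat) /\ forall x, mleval p x = g x.

Lemma mlrep_eq D g h : (forall x, g x = h x) -> mlrep D g -> mlrep D h.
Proof. by move=> gh [p [degp ep]]; exists p; split=> // x; rewrite ep gh. Qed.

Lemma mlrepW D D' g : (D <= D')%nat -> mlrep D g -> mlrep D' g.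
Proof. by move=> leD [p [degp ep]]; exists p; split=> // S /degp /leq_trans; apply. Qed.

Lemma mlrep_monomial (c : RR) (S0 : {set 'I_N}) :
  mlrep #|S0| (fun x => c * \prod_(i in S0) (x i)%:R).
Proof.
exists [ffun S => if S == S0 then c else 0]; split.
  by move=> S; rewrite ffunE; case: (eqVneq S S0) => [-> // | _]; rewrite eqxx.
move=> x; rewrite /mleval (bigD1 S0) //= ffunE eqxx [X in _ + X]big1 ?addr0 //.
by move=> S /negbTE S'0; rewrite ffunE S'0 mul0r.
Qed.

Lemma mlrep_const (c : RR) : mlrep 0 (fun _ => c).
Proof.
by have := mlrep_monomial c set0; rewrite cards0; apply: mlrep_eq => x; rewrite big_set0 mulr1.
Qed.

Lemma mlrep_bit k : mlrep 1 (fun x => (bit x k)%:R).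
Proof.
rewrite /bit; case: (insub k) => [i|]; last exact: mlrepW (mlrep_const 0).
have := mlrep_monomial 1 [set i]; rewrite cards1; apply: mlrep_eq => x.
by rewrite big_set1 mul1r.
Qed.

Lemma mlrepD D1 D2 g h :
  mlrep D1 g -> mlrep D2 h -> mlrep (maxn D1 D2) (fun x => g x + h x).
Proof.
move=> [p [degp evp]] [q [degq evq]]; exists [ffun S => p S + q S]; split.
  move=> S; rewrite ffunE leq_max; have [p0|/degp ->//] := eqVneq (p S) 0.
  by rewrite p0 add0r => /degq ->; rewrite orbT.
move=> x; rewrite -evp -evq /mleval -big_split; apply: eq_bigr => S _.
by rewrite ffunE mulrDl.
Qed.

Lemma mlrepM D1 D2 g h :
  mlrep D1 g -> mlrep D2 h -> mlrep (D1 + D2) (fun x => g x * h x).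
Proof.
move=> [p [degp evp]] [q [degq evq]].
exists [ffun U => \sum_S \sum_T (if S :|: T == U then p S * q T else 0)]; split.
  move=> U; rewrite ffunE; apply: contraR; rewrite -ltnNge => ltU.
  apply/eqP/big1 => S _; apply: big1 => T _; case: eqP => // STU.
  have [-> | /degp leS] := eqVneq (p S) 0; first by rewrite mul0r.
  have [-> | /degq leT] := eqVneq (q T) 0; first by rewrite mulr0.
  by move: ltU; rewrite -STU cardsU; lia.
move=> x; rewrite -evp -evq /mleval big_distrlr /=.
transitivity (\sum_U \sum_S \sum_T
    (if S :|: T == U then p S * q T else 0) * \prod_(i in U) ((x i)%:R : RR)).
  by apply: eq_bigr => U _; rewrite ffunE mulr_suml; apply: eq_bigr => S _; rewrite mulr_suml.
rewrite exchange_big; apply: eq_bigr => S _; rewrite exchange_big; apply: eq_bigr => T _.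
rewrite (bigD1 (S :|: T)) //= eqxx [X in _ + X]big1 ?addr0; last first.
  by move=> U; rewrite eq_sym => /negbTE ->; rewrite mul0r.
by rewrite !prod_natr_bits subUset -mulnb natrM mulrACA.
Qed.

Lemma mlrepZ D (c : RR) g : mlrep D g -> mlrep D (fun x => c * g x).
Proof. exact: mlrepM (mlrep_const c). Qed.

Lemma mlrep_sum D (I : Type) (r : seq I) (F : I -> ('I_N -> bool) -> RR) :
  (forall i, mlrep D (F i)) -> mlrep D (fun x => \sum_(i <- r) F i x).
Proof.
move=> repF; elim: r => [|a r IHr].
  by apply: mlrep_eq (mlrepW (leq0n D) (mlrep_const 0)) => x; rewrite big_nil.
by rewrite -[D]maxnn; apply: mlrep_eq (mlrepD (repF a) IHr) => x; rewrite big_cons.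
Qed.

Lemma mlrep_prod D (I : Type) (r : seq I) (F : I -> ('I_N -> bool) -> RR) :
  (forall i, mlrep D (F i)) -> mlrep (D * size r) (fun x => \prod_(i <- r) F i x).
Proof.
move=> repF; elim: r => [|a r IHr].
  by rewrite muln0; apply: mlrep_eq (mlrep_const 1) => x; rewrite big_nil.
by rewrite mulnS; apply: mlrep_eq (mlrepM (repF a) IHr) => x; rewrite big_cons.
Qed.

Lemma mlrep_halfw m i b : mlrep 1 (fun x => (halfw m x i b)%:R).
Proof.
apply: mlrep_eq (mlrep_sum (index_enum 'I_m) (fun j => mlrep_bit _)) => x.
by rewrite /halfw natr_sum.
Qed.

(* The extra coefficient on [S0] raises the degree to exactly [D] and is
   invisible wherever the monomial of [S0] vanishes. *)
Lemma mlrep_mldeg_eq D g (S0 : {set 'I_N}) (P : ('I_N -> bool) -> Prop) :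
  #|S0| = D -> (forall x, P x -> ~~ (S0 \subset [set i | x i])) -> mlrep D g ->
  exists p : mlpoly N, mldeg p = D /\ forall x, P x -> mleval p x = g x.
Proof.
move=> cardS0 PS0 [p [degp ep]].
exists [ffun S => if S == S0 then 1 else p S]; split.
  apply/eqP; rewrite eqn_leq; apply/andP; split.
    apply/bigmax_leqP => S; rewrite ffunE.
    by case: (eqVneq S S0) => [-> _ | _ /degp]; rewrite ?cardS0.
  by rewrite -{1}cardS0; apply: leq_bigmax_cond; rewrite ffunE eqxx oner_neq0.
move=> x /PS0 /negbTE S0x; rewrite -ep /mleval (bigD1 S0) //= [RHS](bigD1 S0) //=.
rewrite prod_natr_bits S0x !mulr0 !add0r; apply: eq_bigr => S /negbTE S'0.
by rewrite ffunE S'0.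
Qed.

End MultilinearRepresentation.

Lemma inA_first_bits m N c (x : 'I_N -> bool) :
  (0 < m)%nat -> inA m c x 0 -> ~~ (bit x 0 && bit x m).
Proof.
move=> m_gt0 /and3P[/eqP halfw0 _ _].
have bit0 b : halfw m x 0 b = 0%nat -> bit x (b * m) = false.
  rewrite /halfw (bigD1 (Ordinal m_gt0)) //= muln0 add0n addn0.
  by case: (bit x _).
by case: c halfw0 => /bit0; rewrite ?mul1n ?mul0n => ->; rewrite ?andbF.
Qed.

Lemma mlpoly_on_X m n D (g : ('I_(2 * m * n) -> bool) -> RR) :
  (0 < m)%nat -> (0 < n)%nat -> (1 < D <= 2 * m * n)%nat -> mlrep D g ->
  exists p : mlpoly (2 * m * n),
    mldeg p = D /\ forall x, X1 x \/ X0 x -> mleval p x = g x.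
Proof.
move=> m_gt0 n_gt0 /andP[D_gt1 leDN] repg.
have lt0N : (0 < 2 * m * n)%nat by nia.
have ltmN : (m < 2 * m * n)%nat by nia.
pose i0 : 'I_(2 * m * n) := Ordinal lt0N; pose im : 'I_(2 * m * n) := Ordinal ltmN.
have i0m : i0 != im by rewrite -val_eqE /= eq_sym -lt0n.
have cardD : (#|[set i0; im]| <= D <= #|[set: 'I_(2 * m * n)]|)%nat.
  by rewrite cards2 i0m cardsT card_ord; lia.
have [S0 [s01 _ cardS0]] := exists_card_between (subsetT _) cardD.
apply: mlrep_mldeg_eq cardS0 _ repg => x X01; apply/negP => /(subset_trans s01).
rewrite subUset !sub1set !inE => /andP[x0 xm].
have [X | [y [_ X]]] := X01; have := inA_first_bits m_gt0 (X (Ordinal n_gt0));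
  by rewrite -[0%nat]/(val i0) -[m]/(val im) !bitE x0 xm.
Qed.

Section FirstPolynomial.

Variables m n : nat.

Definition weight_prod (x : 'I_(2 * m * n) -> bool) :=
  \prod_(0 <= i < (n./2).+1) ((halfw m x i false)%:R : RR).

Lemma mlrep_weight_prod : mlrep (n./2).+1 weight_prod.
Proof.
have := mlrep_prod (index_iota 0 (n./2).+1) (fun i => mlrep_halfw (2 * m * n) m i false).
by rewrite size_iota subn0 mul1n.
Qed.

Lemma weight_prod_gt0 x :
  (0 < m./2)%nat -> (n./2 < n)%nat -> X1 x -> 0 < weight_prod x.
Proof.
move=> m2_gt0 n2_lt X; rewrite /weight_prod big_seq; apply: prodr_gt0 => i.
rewrite mem_index_iota => /andP[_ lt_i]; have lt_in : (i < n)%nat by lia.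
have /and3P[_ le_half _] := X (Ordinal lt_in).
by rewrite ltr0n; apply: leq_trans le_half; lia.
Qed.

Lemma weight_prod_X0 x : (n./2 < n)%nat -> ~~ odd n -> X0 x -> weight_prod x = 0.
Proof.
move=> n2_lt /negbTE n_even [y [cardy X]].
have [|i lt_i] := @exists_ord_ltn_mem n (n./2).+1 [set i | y i].
  by rewrite cardy addnS ltnS addnn n2_lt -{1}[n]odd_double_half n_even add0n leqnn.
rewrite inE => yi; have /and3P[/eqP halfw0 _ _] := X i; rewrite yi in halfw0.
by rewrite /weight_prod (big_rem (val i)) ?mem_index_iota //= halfw0 mul0r.
Qed.

End FirstPolynomial.

Section SecondPolynomial.

Variables m n : nat.

(* The factor [1 - t/k] vanishes at [t = k]; for even [m] the [m/2 + 1]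
   values of [k] are exactly [m/2 .. m]. *)
Definition heavy (t : nat) :=
  1 - \prod_(k <- iota (m./2) (m./2).+1) (1 - t%:R / (k%:R : RR)).

Lemma mlrep_heavy N D (g : ('I_N -> bool) -> nat) :
  mlrep D (fun x => (g x)%:R) -> mlrep (D * (m./2).+1) (fun x => heavy (g x)).
Proof.
move=> repg.
have repF (k : nat) : mlrep D (fun x => 1 + (- k%:R^-1) * (g x)%:R).
  by rewrite -[D]max0n; apply: mlrepD (mlrep_const _ 1) (mlrepZ _ repg).
have := mlrepD (mlrep_const N 1) (mlrepZ (-1) (mlrep_prod (iota (m./2) (m./2).+1) repF)).
rewrite max0n size_iota; apply: mlrep_eq => x; rewrite /heavy mulN1r.
by congr (_ - _); apply: eq_bigr => k _; rewrite mulNr mulrC.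
Qed.

Lemma heavy0 : heavy 0 = 0.
Proof. by rewrite /heavy big1 => [|k _]; rewrite ?subrr // mul0r subr0. Qed.

Lemma heavy_eq1 k :
  (0 < m./2)%nat -> ~~ odd m -> (m./2 <= k <= m)%nat -> heavy k = 1.
Proof.
move=> m2_gt0 m_even /andP[le_half le_km].
have k_neq0 : (k%:R : RR) != 0 by rewrite pnatr_eq0; lia.
rewrite /heavy (big_rem k); last by rewrite mem_iota; lia.
by rewrite /= divff // subrr mul0r subr0.
Qed.

Definition heavy_count (x : 'I_(2 * m * n) -> bool) :=
  (n./2)%:R - \sum_(i < n) heavy (halfw m x i true).

Lemma mlrep_heavy_count : mlrep (m./2).+1 heavy_count.
Proof.
have repH (i : 'I_n) :
    mlrep (m./2).+1 (fun x : 'I_(2 * m * n) -> bool => heavy (halfw m x i true)).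
  by rewrite -[(m./2).+1]mul1n; apply: mlrep_heavy (mlrep_halfw _ _ _ _).
have := mlrepD (mlrep_const _ (n./2)%:R) (mlrepZ (-1) (mlrep_sum (index_enum 'I_n) repH)).
by rewrite max0n; apply: mlrep_eq => x; rewrite mulN1r.
Qed.

Lemma heavy_count_X1 x : X1 x -> heavy_count x = (n./2)%:R.
Proof.
move=> X; rewrite /heavy_count big1 ?subr0 // => i _.
by have /and3P[/eqP -> _ _] := X i; rewrite heavy0.
Qed.

Lemma heavy_count_X0 x : (0 < m./2)%nat -> ~~ odd m -> X0 x -> heavy_count x = 0.
Proof.
move=> m2_gt0 m_even [y [cardy X]].
rewrite /heavy_count (eq_bigr (fun i => (y i : nat)%:R)); last first.
  move=> i _; have := X i; case: (y i) => /and3P[/eqP halfw0 le_half le_m].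
    by rewrite heavy_eq1 // le_half le_m.
  by rewrite halfw0 heavy0.
rewrite -natr_sum; have -> : (\sum_(i < n) (y i : nat))%nat = #|[set i | y i]|.
  by rewrite -sum1_card [RHS]big_mkcond; apply: eq_bigr => i _; rewrite inE; case: (y i).
by rewrite cardy subrr.
Qed.

End SecondPolynomial.

Theorem mainTheorem2 (m n : nat) :
  (0 < m)%nat -> (0 < n)%nat -> ~~ odd m -> ~~ odd n ->
  [/\ (exists p : mlpoly (2 * m * n),
         mldeg p = (minn (n./2) (m./2)).+1 /\
         (forall x, X1 x -> mleval p x != 0) /\
         (forall x, X0 x -> mleval p x = 0)),
      (exists p : mlpoly (2 * m * n),
         mldeg p = (n./2).+1 /\
         (forall x, X1 x -> 0 < mleval p x) /\
         (forall x, X0 x -> mleval p x = 0)) &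
      (exists p : mlpoly (2 * m * n),
         mldeg p = (m./2).+1 /\
         (forall x, X1 x -> mleval p x = (n./2)%:R) /\
         (forall x, X0 x -> mleval p x = 0))].
Proof.
move=> m_gt0 n_gt0 m_even n_even.
have half_gt0 k : (0 < k)%nat -> ~~ odd k -> (0 < k./2 < k)%nat.
  by move=> k_gt0 /negbTE k_even; have := odd_double_half k; rewrite k_even; lia.
have /andP[n2_gt0 n2_lt] := half_gt0 n n_gt0 n_even.
have /andP[m2_gt0 m2_lt] := half_gt0 m m_gt0 m_even.
have [p [degp evp]] : exists p : mlpoly (2 * m * n),
    mldeg p = (n./2).+1 /\ forall x, X1 x \/ X0 x -> mleval p x = weight_prod x.
  by apply: mlpoly_on_X (mlrep_weight_prod m n) => //; nia.
have [q [degq evq]] : exists q : mlpoly (2 * m * n),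
    mldeg q = (m./2).+1 /\ forall x, X1 x \/ X0 x -> mleval q x = heavy_count x.
  by apply: mlpoly_on_X (mlrep_heavy_count m n) => //; nia.
have p_X1 x : X1 x -> 0 < mleval p x by move=> X; rewrite evp ?weight_prod_gt0; auto.
have p_X0 x : X0 x -> mleval p x = 0 by move=> X; rewrite evp ?weight_prod_X0; auto.
have q_X1 x : X1 x -> mleval q x = (n./2)%:R by move=> X; rewrite evq ?heavy_count_X1; auto.
have q_X0 x : X0 x -> mleval q x = 0 by move=> X; rewrite evq ?heavy_count_X0; auto.
split; [|by exists p | by exists q].
case: (leqP (n./2) (m./2)) => [le_nm | lt_mn].
  by exists p; split=> //; split=> // x /p_X1 /lt0r_neq0.
exists q; split=> //; split=> // x /q_X1 ->.
by rewrite pnatr_eq0 -lt0n.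
Qed.
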